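(* Let $E$ be a $p$-adic field, $\psi$ a nontrivial additive character of $E$, and $f_1,\dots,f_n$ analytic functions on a ball $B\subset E^N$ centered at $0$ whose differentials $d_0f_1,\dots,d_0f_n$ at $0$ are linearly independent. Then there is $a\in E^*$ such that for all $t\in E^*$ with $|t|$ sufficiently large, the functions $\psi(tf_1),\dots,\psi(tf_n)$ restricted to $t^{-1}aB$ are linearly independent. *)

From HB Require Import structures.
From mathcomp Require Import all_boot all_order all_algebra.
From mathcomp Require Import reals complex.
Set Implicit Arguments. Unset Strict Implicit. Unset Printing Implicit Defensive.
Import Order.TTheory GRing.Theory Num.Theory.
Local Open Scope ring_scope.

(* A p-adic field: a field E of characteristic 0 with a non-archimedean,
   nontrivial, discrete absolute value v : E -> R, complete, with finite
   residue field.  These are exactly the finite extensions of Q_p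
   (for some prime p), i.e. the non-archimedean local fields of char. 0. *)
Record padic_field (R : realType) (E : fieldType) (v : E -> R) : Prop := {
  pf_ge0 : forall x, 0 <= v x;
  pf_eq0 : forall x, (v x == 0) = (x == 0);
  pf_mul : forall x y, v (x * y) = v x * v y;
  pf_ultra : forall x y, v (x + y) <= Num.max (v x) (v y);
  pf_char0 : forall k : nat, (k.+1)%:R != 0 :> E;
  pf_discrete : exists pi : E, 0 < v pi < 1 /\
      forall x, v x < 1 -> v x <= v pi;
  pf_complete : forall u : nat -> E,
      (forall e : R, 0 < e -> exists K, forall m k, (K <= m)%N -> (K <= k)%N ->
          v (u m - u k) < e) ->
      exists l : E, forall e : R, 0 < e -> exists K, forall m, (K <= m)%N ->
          v (u m - l) < e;
  pf_finite_residue : exists s : seq E, all (fun y => v y <= 1) s /\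
      forall x, v x <= 1 -> has (fun y => v (x - y) < 1) s
}.

Definition vnorm (R : realType) (E : fieldType) (v : E -> R) (N : nat)
  (x : 'rV[E]_N) : R := \big[Num.max/0]_(j < N) v (x 0 j).

Definition ball0 (R : realType) (E : fieldType) (v : E -> R) (N : nat)
  (r : R) : 'rV[E]_N -> Prop := fun x => vnorm v x <= r.

Definition mdeg (N : nat) (al : 'I_N -> nat) : nat := (\sum_(j < N) al j)%N.

Definition psum (E : fieldType) (N : nat) (c : ('I_N -> nat) -> E) (d : nat)
  (x : 'rV[E]_N) : E :=
  \sum_(al : {ffun 'I_N -> 'I_d.+1} | (\sum_(j < N) (al j : nat) <= d)%N)
     c (fun j => (al j : nat)) * \prod_(j < N) x 0 j ^+ (al j).

Definition analytic_on_ball (R : realType) (E : fieldType) (v : E -> R)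
  (N : nat) (r : R) (f : 'rV[E]_N -> E) : Prop :=
  exists c : ('I_N -> nat) -> E,
    (forall e : R, 0 < e -> exists D, forall al, (D <= mdeg al)%N ->
        v (c al) * r ^+ mdeg al < e) /\
    (forall x, ball0 v r x -> forall e : R, 0 < e -> exists D, forall d,
        (D <= d)%N -> v (f x - psum c d x) < e).

Definition differential_at0 (R : realType) (E : fieldType) (v : E -> R)
  (N : nat) (f : 'rV[E]_N -> E) (L : 'rV[E]_N) : Prop :=
  forall e : R, 0 < e -> exists2 dl : R, 0 < dl & forall x,
    vnorm v x < dl ->
    v (f x - f 0 - \sum_(j < N) L 0 j * x 0 j) <= e * vnorm v x.

Definition nontrivial_add_char (R : realType) (E : fieldType) (v : E -> R)
  (psi : E -> R[i]) : Prop :=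
  [/\ forall x y, psi (x + y) = psi x * psi y,
      forall x, `|psi x| = 1,
      forall x (e : R), 0 < e -> exists2 dl : R, 0 < dl &
        forall y, v (y - x) < dl -> `|psi y - psi x| < (e%:C)%C
    & exists x, psi x != 1].

Definition lin_indep_on (E : fieldType) (N n : nat) (R : realType)
  (S : 'rV[E]_N -> Prop) (g : 'I_n -> 'rV[E]_N -> R[i]) : Prop :=
  forall lam : 'I_n -> R[i],
    (forall x, S x -> \sum_(i < n) lam i * g i x = 0) -> forall i, lam i = 0.

Definition scaled_set (E : fieldType) (N : nat) (c : E) (B : 'rV[E]_N -> Prop)
  : 'rV[E]_N -> Prop := fun x => exists2 y, B y & x = c *: y.

From HB Require Import structures.
From mathcomp Require Import all_boot all_order all_algebra.
From mathcomp Require Import reals complex ring lra.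
Import Order.TTheory GRing.Theory Num.Theory.
Local Open Scope ring_scope.

(* For |t| large write t f_i((a/t) y) = t f_i(0) + a L_i(y) + t rho_i((a/t) y), where
   L_i = d_0 f_i and rho_i(x) = o(|x|).  A continuous character psi is trivial near 0
   (a value near 1 other than 1 is pushed away from 1 by repeated squaring), so for |t|
   large the remainder is invisible to psi and, on t^-1 a B, psi(t f_i) is the nonzero
   constant psi(t f_i(0)) times the character y |-> psi(a L_i(y)) of the additive group B.
   The L_i being distinct, these characters are pairwise distinct once |a| is large, and
   distinct characters are linearly independent (Dedekind-Artin). *)

Lemma large_forall_fin {R : realDomainType} {I : finType} {T : Type}
    (g : T -> R) (P : I -> T -> Prop) :
  (forall i, exists K, forall x, K < g x -> P i x) ->
  exists K, forall x, K < g x -> forall i, P i x.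
Proof.
case/fin_all_exists=> K hK; exists (\big[Num.max/0]_i K i) => x hx i.
by apply: hK; apply: le_lt_trans hx; apply: le_bigmax.
Qed.

Lemma bernoulli_ineq {R : realDomainType} {x : R} :
  0 <= x -> forall n, 1 + x *+ n <= (1 + x) ^+ n.
Proof.
move=> x0; elim => [|n IH]; first by rewrite mulr0n addr0 expr0.
rewrite exprS mulrS -mulr_natr in IH *.
have n0 : 0 <= n%:R :> R by rewrite ler0n.
apply: le_trans (ler_wpM2l _ IH); nra.
Qed.

Lemma exprn_unbounded {R : archiRealFieldType} (q K : R) :
  1 < q -> exists k : nat, K < q ^+ k.
Proof.
move=> q1; have q10 : 0 < q - 1 by rewrite subr_gt0.
pose k := Num.Def.archi_bound (Num.max ((K - 1) / (q - 1)) 0).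
have hk : (K - 1) / (q - 1) < k%:R.
  apply: le_lt_trans (archi_boundP _); first by rewrite le_max lexx.
  by rewrite le_max lexx orbT.
exists k; rewrite ltr_pdivrMr // in hk.
have := bernoulli_ineq (ltW q10) k; rewrite addrCA subrr addr0 -mulr_natr; lra.
Qed.

Section DedekindArtin.
Context {C : fieldType} {T : Type} {S : T -> Prop} {add : T -> T -> T} {y0 : T}.
Hypotheses (S_y0 : S y0) (S_add : forall y z, S y -> S z -> S (add y z)).

Lemma characters_lin_indep {n} (chi : 'I_n -> T -> C) :
  (forall i y z, chi i (add y z) = chi i y * chi i z) ->
  (forall i y, chi i y != 0) ->
  (forall i j, i != j -> exists2 y, S y & chi i y != chi j y) ->
  forall c : 'I_n -> C, (forall y, S y -> \sum_i c i * chi i y = 0) ->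
  forall i, c i = 0.
Proof.
elim: n chi => [|n IH] chi chiM chi_neq0 chi_sep c hc i; first by case: i.
have c_lift k : c (lift ord0 k) = 0.
  have [z Sz hz] := chi_sep ord0 (lift ord0 k) (neq_lift _ _).
  pose d k' := c (lift ord0 k') * (chi (lift ord0 k') z - chi ord0 z).
  suff /(_ k) /eqP : forall k', d k' = 0.
    by rewrite mulf_eq0 subr_eq0 [_ == chi ord0 z]eq_sym (negbTE hz) orbF => /eqP.
  (* The relation at z + y minus chi_0(z) times the relation at y no longer
     involves chi_0. *)
  apply: (IH (fun k' => chi (lift ord0 k')) _ _ _ d) => [k' y w|k' y|k1 k2 ne|y Sy].
  - exact: chiM.
  - exact: chi_neq0.
  - by apply: chi_sep; rewrite (inj_eq lift_inj).
  transitivity (\sum_i c i * chi i (add z y) - chi ord0 z * \sum_i c i * chi i y);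
    last by rewrite hc; [rewrite hc // mulr0 subr0 | exact: S_add].
  rewrite mulr_sumr -sumrB big_ord_recl chiM.
  rewrite [X in X + _](_ : _ = 0) ?add0r; last by ring.
  by apply: eq_bigr => k' _; rewrite /d chiM; ring.
case: (unliftP ord0 i) => [k ->|->]; first exact: c_lift.
have := hc y0 S_y0; rewrite big_ord_recl big1 ?addr0 => [/eqP|k _]; last first.
  by rewrite c_lift mul0r.
by rewrite mulf_eq0 (negbTE (chi_neq0 _ _)) orbF => /eqP.
Qed.

End DedekindArtin.

Section NearOne.
Context {R : realType}.
Local Notation normc := (@Normc.normc R).

Lemma normc_ge0 (z : R[i]) : 0 <= normc z.
Proof. by case: z => a b; rewrite /Normc.normc sqrtr_ge0. Qed.

Lemma normc_sqr_sub1_ge {u : R[i]} :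
  normc (u - 1) < 1/2 -> 3/2 * normc (u - 1) <= normc (u ^+ 2 - 1).
Proof.
move=> hu; rewrite -[X in u ^+ 2 - X](expr1n _ 2) subr_sqr Normc.normcM.
have h2 : normc (1 *+ 2) <= normc (u + 1) + normc (- (u - 1)).
  by rewrite (_ : 1 *+ 2 = (u + 1) + - (u - 1)) ?le_normcD //; rewrite mulr2n; ring.
rewrite normcN normcMn Normc.normc1 in h2.
have := normc_ge0 (u - 1); nra.
Qed.

Lemma eq1_of_iterated_squares_near1 (w : R[i]) :
  (forall k, normc (w ^+ (2 ^ k) - 1) < 1/2) -> w = 1.
Proof.
move=> near1; set d := normc (w - 1).
have grow k : (3/2) ^+ k * d <= normc (w ^+ (2 ^ k) - 1).
  elim: k => [|k IH]; first by rewrite expr0 mul1r expn0 expr1.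
  rewrite expnS mulnC exprM exprS -mulrA.
  have := normc_sqr_sub1_ge (near1 k); nra.
have : d <= 0.
  rewrite leNgt; apply/negP => d0.
  have [k hk] := @exprn_unbounded R (3/2) (1 / (2 * d)) ltac:(lra).
  have := near1 k; have := grow k; rewrite ltr_pdivrMr in hk; nra.
rewrite le_eqVlt ltNge normc_ge0 orbF => /eqP /Normc.eq0_normc /eqP.
by rewrite subr_eq0 => /eqP.
Qed.

End NearOne.

Section Dot.
Context {K : comPzRingType} {N : nat}.
Implicit Types u w y z : 'rV[K]_N.

Definition dotr u y : K := \sum_(j < N) u 0 j * y 0 j.

Lemma dotrD u y z : dotr u (y + z) = dotr u y + dotr u z.
Proof. by rewrite /dotr -big_split; apply: eq_bigr => j _; rewrite mxE mulrDr. Qed.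

Lemma dotrZ u c y : dotr u (c *: y) = c * dotr u y.
Proof. by rewrite /dotr mulr_sumr; apply: eq_bigr => j _; rewrite mxE mulrCA. Qed.

Lemma dotrBl u w y : dotr (u - w) y = dotr u y - dotr w y.
Proof. by rewrite /dotr -sumrB; apply: eq_bigr => j _; rewrite !mxE mulrBl. Qed.

Lemma dotr_delta u k : dotr u (delta_mx 0 k) = u 0 k.
Proof.
rewrite /dotr (bigD1 k) //= big1 => [|j /negbTE njk]; last by rewrite mxE njk mulr0.
by rewrite mxE !eqxx mulr1 addr0.
Qed.

End Dot.

Lemma row_free_row_inj {F : fieldType} {m n} {A : 'M[F]_(m, n)} :
  row_free A -> injective (fun i => row i A).
Proof.
move=> freeA i j; rewrite !rowE => /(row_free_inj freeA) /matrixP /(_ 0 i).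
by rewrite !mxE !eqxx /=; case: eqP => // _ /eqP; rewrite oner_eq0.
Qed.

Section Valuation.
Context {R : realType} {E : fieldType} {v : E -> R}.
Hypothesis hE : padic_field v.

Lemma v0 : v 0 = 0.
Proof. by apply/eqP; rewrite (pf_eq0 hE). Qed.

Lemma v_gt0 {x} : x != 0 -> 0 < v x.
Proof. by move=> x0; rewrite lt_def (pf_eq0 hE) x0 (pf_ge0 hE). Qed.

Lemma v1 : v 1 = 1.
Proof.
have v10 : v 1 != 0 by rewrite (pf_eq0 hE) oner_eq0.
by apply: (mulfI v10); rewrite -(pf_mul hE) !mulr1.
Qed.

Lemma vV {x} : x != 0 -> v x^-1 = (v x)^-1.
Proof.
move=> x0; have vx0 : v x != 0 by rewrite (pf_eq0 hE).
by apply: (mulfI vx0); rewrite -(pf_mul hE) !mulfV // v1.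
Qed.

Lemma vX x m : v (x ^+ m) = v x ^+ m.
Proof. by elim: m => [|m IH]; rewrite ?expr0 ?v1 // !exprS (pf_mul hE) IH. Qed.

Lemma vMn x m : v (x *+ m) <= v x.
Proof.
elim: m => [|m IH]; first by rewrite mulr0n v0 (pf_ge0 hE).
by rewrite mulrS; apply: le_trans (pf_ultra hE _ _) _; rewrite ge_max lexx IH.
Qed.

Lemma exists_large_v K : exists2 a : E, a != 0 & K < v a.
Proof.
have [pi [/andP [pi0 pi1] _]] := pf_discrete hE.
have pi_neq0 : pi != 0 by rewrite -(pf_eq0 hE) gt_eqF.
have [|m hm] := @exprn_unbounded _ (v pi^-1) K; first by rewrite vV // invf_gt1.
by exists (pi^-1 ^+ m); rewrite ?expf_neq0 ?invr_eq0 // vX.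
Qed.

Context {N : nat}.
Implicit Types x y z : 'rV[E]_N.

Lemma vnorm_ge0 y : 0 <= vnorm v y.
Proof. exact: bigmax_ge_id. Qed.

Lemma v_le_vnorm y j : v (y 0 j) <= vnorm v y.
Proof. exact: le_bigmax. Qed.

Lemma vnorm_le y c : 0 <= c -> (forall j, v (y 0 j) <= c) -> vnorm v y <= c.
Proof. by move=> c0 hy; apply: bigmax_le. Qed.

Lemma vnormZ a y : vnorm v (a *: y) <= v a * vnorm v y.
Proof.
apply: vnorm_le => [|j]; first by rewrite mulr_ge0 ?vnorm_ge0 ?(pf_ge0 hE).
by rewrite mxE (pf_mul hE) ler_wpM2l ?(pf_ge0 hE) ?v_le_vnorm.
Qed.

Lemma ball0_0 {r} : 0 <= r -> ball0 v r (0 : 'rV_N).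
Proof. by move=> r0; apply: vnorm_le => // j; rewrite mxE v0. Qed.

Lemma ball0D {r} : 0 <= r ->
  forall y z, ball0 v r y -> ball0 v r z -> ball0 v r (y + z).
Proof.
move=> r0 y z hy hz; apply: vnorm_le => // j; rewrite mxE.
apply: le_trans (pf_ultra hE _ _) _.
by rewrite ge_max !(le_trans (v_le_vnorm _ j)).
Qed.

Lemma rescaled_remainder_small {f : 'rV[E]_N -> E} {L : 'rV[E]_N} {rho eps} :
  differential_at0 v f L -> 0 < rho -> 0 < eps ->
  exists K, forall t, t != 0 -> K < v t -> forall x, vnorm v x <= rho ->
    v (t * (f (t^-1 *: x) - f 0 - dotr L (t^-1 *: x))) < eps.
Proof.
move=> dfL rho0 eps0; set c := eps / (2 * rho).
have c0 : 0 < c by rewrite divr_gt0 ?mulr_gt0.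
have c_rho : c * rho = eps / 2 by rewrite /c; field; rewrite gt_eqF.
have [dl dl0 hdl] := dfL c c0.
exists (rho / dl) => t t0 ht x hx; have vt0 := v_gt0 t0.
set X := vnorm v (t^-1 *: x).
have tX : v t * X <= rho.
  apply: le_trans (ler_wpM2l (ltW vt0) (vnormZ _ _)) _.
  by rewrite vV // mulrA mulfV ?gt_eqF // mul1r.
have X_dl : X < dl by rewrite ltr_pdivrMr // in ht; nra.
rewrite (pf_mul hE); apply: le_lt_trans (ler_wpM2l (ltW vt0) (hdl _ X_dl)) _.
have := vnorm_ge0 (t^-1 *: x); rewrite -/X; nra.
Qed.

End Valuation.

Section AdditiveCharacter.
Context {R : realType} {E : fieldType} {v : E -> R}.
Hypothesis hE : padic_field v.
Context {psi : E -> R[i]}.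
Hypothesis hpsi : nontrivial_add_char v psi.

Lemma psiD x y : psi (x + y) = psi x * psi y.
Proof. by case: hpsi. Qed.

Lemma psi_neq0 x : psi x != 0.
Proof.
case: hpsi => _ psi_norm _ _; apply/eqP => psix0.
by have /eqP := psi_norm x; rewrite psix0 normr0 eq_sym oner_eq0.
Qed.

Lemma psi0 : psi 0 = 1.
Proof. by apply: (mulfI (psi_neq0 0)); rewrite -psiD !addr0 mulr1. Qed.

Lemma psiMn x m : psi (x *+ m) = psi x ^+ m.
Proof.
by elim: m => [|m IH]; rewrite ?mulr0n ?psi0 // mulrS psiD IH exprS.
Qed.

Lemma psi_eq1_near0 : exists2 dl : R, 0 < dl & forall y, v y < dl -> psi y = 1.
Proof.
case: hpsi => _ _ psi_cont _.
have [dl dl0 near1] := psi_cont 0 (1/2) ltac:(lra).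
exists dl => // y vy; apply: eq1_of_iterated_squares_near1 => k.
rewrite -ltcR -psiMn -psi0; apply: near1.
by rewrite subr0; apply: le_lt_trans (vMn hE _ _) vy.
Qed.

Lemma psi_rescaled {N} {f : 'rV[E]_N -> E} {L : 'rV[E]_N} {rho} :
  differential_at0 v f L -> 0 < rho ->
  exists K, forall t, t != 0 -> K < v t -> forall x, vnorm v x <= rho ->
    psi (t * f (t^-1 *: x)) = psi (t * f 0) * psi (dotr L x).
Proof.
move=> dfL rho0; have [dl dl0 psi1] := psi_eq1_near0.
have [K hK] := rescaled_remainder_small hE dfL rho0 dl0.
exists K => t t0 Kt x hx.
set rem := f (t^-1 *: x) - f 0 - dotr L (t^-1 *: x).
have -> : t * f (t^-1 *: x) = t * f 0 + dotr L x + t * rem.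
  by rewrite /rem dotrZ; field.
by rewrite !psiD (psi1 _ (hK _ t0 Kt _ hx)) mulr1.
Qed.

Lemma psi_dotr_nontrivial {N} {u : 'rV[E]_N} {r} : 0 < r -> u != 0 ->
  exists K, forall a, K < v a -> exists2 y, ball0 v r y & psi (a * dotr u y) != 1.
Proof.
move=> r0 u0.
have [k uk0] : exists k, u 0 k != 0.
  have [k|u_eq0] := pickP (fun k => u 0 k != 0); first by exists k.
  by case/eqP: u0; apply/rowP => k; rewrite mxE; apply/eqP/negbFE/u_eq0.
have [x0 psi_x0] : exists x0, psi x0 != 1 by case: hpsi.
have vuk := v_gt0 hE uk0.
exists (v x0 / (r * v (u 0 k))) => a ha.
have a0 : a != 0.
  rewrite -(pf_eq0 hE) gt_eqF // (le_lt_trans _ ha) //.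
  by rewrite divr_ge0 ?mulr_ge0 ?(pf_ge0 hE) ?ltW.
have va := v_gt0 hE a0.
exists ((x0 / (a * u 0 k)) *: delta_mx 0 k); last first.
  by rewrite dotrZ dotr_delta (_ : a * _ = x0) //; field; rewrite a0 uk0.
apply: vnorm_le => [|j]; first exact: ltW.
rewrite !mxE eqxx /=; case: eqP => _; last by rewrite mulr0 v0 // ltW.
rewrite mulr1 (pf_mul hE) vV ?mulf_neq0 // (pf_mul hE) ler_pdivrMr ?mulr_gt0 //.
by rewrite ltr_pdivrMr ?mulr_gt0 // in ha; lra.
Qed.

Lemma psi_dotr_lin_indep {n N} {D : 'M[E]_(n, N)} {r} : 0 < r -> row_free D ->
  exists K, forall a, K < v a -> forall c : 'I_n -> R[i],
    (forall y, ball0 v r y -> \sum_i c i * psi (a * dotr (row i D) y) = 0) ->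
    forall i, c i = 0.
Proof.
move=> r0 freeD.
have [K hK] : exists K, forall a, K < v a -> forall ij : 'I_n * 'I_n,
    ij.1 != ij.2 -> exists2 y, ball0 v r y &
      psi (a * dotr (row ij.1 D) y) != psi (a * dotr (row ij.2 D) y).
  apply: large_forall_fin => -[i j].
  have [<-|ij] := eqVneq i j; first by exists 0.
  have u0 : row i D - row j D != 0.
    by rewrite subr_eq0 (inj_eq (row_free_row_inj freeD)).
  have [K hK] := psi_dotr_nontrivial r0 u0.
  exists K => a /hK [y By psi_u] _; exists y => //; apply: contra psi_u => /eqP eq_ij.
  apply/eqP/(mulIf (psi_neq0 (a * dotr (row j D) y))).
  by rewrite mul1r -psiD dotrBl mulrBr subrK eq_ij.
exists K => a Ka c hc i.
apply: (characters_lin_indep (ball0_0 hE (ltW r0)) (ball0D hE (ltW r0))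
  (fun i y => psi (a * dotr (row i D) y))) => // [j y z|j y|j k jk].
- by rewrite dotrD mulrDr psiD.
- exact: psi_neq0.
- exact: (hK a Ka (j, k)).
Qed.

End AdditiveCharacter.

Theorem lemma2p7 (R : realType) (E : fieldType) (v : E -> R)
  (hE : padic_field v) (psi : E -> R[i]) (hpsi : nontrivial_add_char v psi)
  (N n : nat) (r : R) (hr : 0 < r) (f : 'I_n -> 'rV[E]_N -> E)
  (hf : forall i, analytic_on_ball v r (f i))
  (D : 'M[E]_(n, N)) (hD : forall i, differential_at0 v (f i) (row i D))
  (hind : row_free D) :
  exists2 a : E, a != 0 &
    exists M : R, forall t : E, t != 0 -> M < v t ->
      lin_indep_on (scaled_set (t^-1 * a) (ball0 v r))
                   (fun i x => psi (t * f i x)).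
Proof.
have [K hK] := psi_dotr_lin_indep hE hpsi hr hind.
have [a a0 Ka] := exists_large_v hE K.
have rho0 : 0 < v a * r by rewrite mulr_gt0 ?v_gt0.
have [M hM] : exists M, forall t, M < v t -> forall i, t != 0 ->
    forall x, vnorm v x <= v a * r ->
    psi (t * f i (t^-1 *: x)) = psi (t * f i 0) * psi (dotr (row i D) x).
  apply: large_forall_fin => i; have [M hM] := psi_rescaled hE hpsi (hD i) rho0.
  by exists M => t Mt t0; apply: hM.
exists a => //; exists M => t t0 Mt lam hlam i.
suff hc y : ball0 v r y ->
    \sum_j (lam j * psi (t * f j 0)) * psi (a * dotr (row j D) y) = 0.
  have /eqP := hK a Ka _ hc i.
  by rewrite mulf_eq0 (negbTE (psi_neq0 hpsi _)) orbF => /eqP.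
move=> By; rewrite -[RHS](hlam ((t^-1 * a) *: y)); last by exists y.
apply: eq_bigr => j _; rewrite -scalerA hM ?dotrZ ?mulrA //.
exact: le_trans (vnormZ hE _ _) (ler_wpM2l (pf_ge0 hE _) By).
Qed.
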